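(* Let $\phi\colon\mathbb{R}\to\mathbb{R}$ be an increasing homeomorphism with $\phi(0)=0$, let $f\colon\mathbb{R}\to\mathbb{R}$ be continuous, and let $h\colon[0,T]\times\mathbb{R}\to\mathbb{R}$ be a Carathéodory function satisfying: $(A_0)$ for all $t_0\in[0,T]$, $u_0\in\mathbb{R}$ and $\varepsilon>0$ there exists $\delta>0$ such that if $|t-t_0|<\delta$ and $|u-u_0|<\delta$ then $|h(t,u)-h(t,u_0)|<\varepsilon$ for a.e. $t$. Let $a>0$ and $\alpha\in\mathfrak{D}$ be such that $$(\phi(\alpha'(t)))'+f(\alpha(t))\alpha'(t)+h(t,\alpha(t))\ge a\quad\text{for a.e. }t\in[0,T].$$ Then $\alpha$ is a strict lower solution to $(\phi(u'))'+f(u)u'+h(t,u)=0$.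
   Context: $\mathcal{C}^1_T=\{u\in\mathcal{C}^1([0,T]):u(0)=u(T),\,u'(0)=u'(T)\}$ and $\mathfrak{D}=\{u\in\mathcal{C}^1_T:\phi(u')\text{ is absolutely continuous}\}$. A $T$-periodic solution of $(\phi(u'))'+f(u)u'+h(t,u)=0$ is a $u\in\mathfrak{D}$ satisfying the equation a.e. A function $\alpha\in\mathfrak{D}$ is a strict lower solution of this equation if $(\phi(\alpha'))'+f(\alpha)\alpha'+h(t,\alpha)>0$ for a.e. $t\in[0,T]$ and, whenever $u$ is a $T$-periodic solution with $u(t)\ge\alpha(t)$ for all $t\in[0,T]$, then $u(t)>\alpha(t)$ for all $t\in[0,T]$. A Carathéodory function is measurable in $t$, continuous in $u$, and for each $r>0$ bounded in absolute value on $[0,T]\times[-r,r]$ by an $L^1$ function of $t$. *)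

From HB Require Import structures.
From mathcomp Require Import all_boot all_order all_algebra.
From mathcomp Require Import all_classical all_reals all_analysis.
Set Implicit Arguments. Unset Strict Implicit. Unset Printing Implicit Defensive.
Import Order.TTheory GRing.Theory Num.Theory.
Import numFieldNormedType.Exports.
Local Open Scope classical_set_scope.
Local Open Scope ring_scope.

Section Defs.
Variable R : realType.

Definition abs_cont_on (a b : R) (g : R -> R) : Prop :=
  forall e : R, 0 < e -> exists2 d : R, 0 < d &
    forall (n : nat) (l r : 'I_n -> R),
      (forall i, a <= l i /\ l i <= r i /\ r i <= b) ->
      (forall i j, i != j -> r i <= l j \/ r j <= l i) ->
      \sum_(i < n) (r i - l i) < d ->
      \sum_(i < n) `|g (r i) - g (l i)| < e.

Definition C1_on (T : R) (u du : R -> R) : Prop :=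
  {within `[0, T], continuous du} /\
  forall t, 0 <= t <= T ->
    (fun s => (u s - u t) / (s - t)) @ within [set s | 0 <= s <= T /\ s != t] (nbhs t)
      --> du t.

Definition C1_T (T : R) (u du : R -> R) : Prop :=
  C1_on T u du /\ u 0 = u T /\ du 0 = du T.

Definition in_D (phi : R -> R) (T : R) (u du : R -> R) : Prop :=
  C1_T T u du /\ abs_cont_on 0 T (phi \o du).

(* the differential operator evaluated at t (meaningful where phi(u') is derivable) *)
Definition Lop (phi f : R -> R) (h : R -> R -> R) (u du : R -> R) (t : R) : R :=
  derive1 (phi \o du) t + f (u t) * du t + h t (u t).

Definition periodic_solution (phi f : R -> R) (h : R -> R -> R) (T : R)
  (u du : R -> R) : Prop :=
  in_D phi T u du /\
  {ae (@lebesgue_measure R), forall t, 0 <= t <= T ->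
     derivable (phi \o du) t 1 /\ Lop phi f h u du t = 0}.

Definition strict_lower_solution (phi f : R -> R) (h : R -> R -> R) (T : R)
  (alpha dalpha : R -> R) : Prop :=
  in_D phi T alpha dalpha /\
  {ae (@lebesgue_measure R), forall t, 0 <= t <= T ->
     derivable (phi \o dalpha) t 1 /\ 0 < Lop phi f h alpha dalpha t} /\
  (forall u du, periodic_solution phi f h T u du ->
     (forall t, 0 <= t <= T -> alpha t <= u t) ->
     (forall t, 0 <= t <= T -> alpha t < u t)).

Definition increasing_homeo_fix0 (phi : R -> R) : Prop :=
  (forall x y, x < y -> phi x < phi y) /\ continuous phi /\
  (exists psi : R -> R, cancel phi psi /\ cancel psi phi /\ continuous psi) /\
  phi 0 = 0.

Definition caratheodory (T : R) (h : R -> R -> R) : Prop :=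
  (forall u, measurable_fun `[0, T] (fun t => h t u)) /\
  (forall t, 0 <= t <= T -> continuous (h t)) /\
  (forall r : R, 0 < r -> exists g : R -> R,
     (@lebesgue_measure R).-integrable `[0, T] (EFin \o g) /\
     forall t u, 0 <= t <= T -> `|u| <= r -> `|h t u| <= g t).

Definition condA0 (T : R) (h : R -> R -> R) : Prop :=
  forall t0 u0 e : R, 0 <= t0 <= T -> 0 < e -> exists2 d : R, 0 < d &
    {ae (@lebesgue_measure R), forall t, 0 <= t <= T -> `|t - t0| < d ->
       forall u, `|u - u0| < d -> `|h t u - h t u0| < e}.

End Defs.

From HB Require Import structures.
From mathcomp Require Import all_boot all_order all_algebra.
From mathcomp Require Import all_classical all_reals all_analysis.
From mathcomp Require Import ring lra measurable_realfun.
Import Order.TTheory GRing.Theory Num.Theory.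
Import numFieldNormedType.Exports.
Local Open Scope classical_set_scope.
Local Open Scope ring_scope.

(* Suppose a periodic solution u >= alpha touches alpha.  Then w = u - alpha >= 0
   has a zero t1 in [0, T) with w'(t1) = 0 (by periodicity if the zero is at an
   endpoint).  Near t1 the terms f(u)u' and f(alpha)alpha' are close, and by (A0)
   so are h(t, u(t)) and h(t, alpha(t)); hence
   (phi(u'))' - (phi(alpha'))' <= -a/2 a.e. on some [t1, t1 + dl].  As
   phi(u') - phi(alpha') is absolutely continuous and vanishes at t1, it is
   negative on ]t1, t1 + dl], so u' < alpha' there and w strictly decreases from
   its zero t1, contradicting w >= 0.

   The one non-elementary ingredient is that an absolutely continuous g with
   g' <= m a.e. on [c, d] satisfies g d - g c <= m (d - c).  Cover the
   exceptional null set by an open set U of small measure; a real induction over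
   [c, d] bounds the excess g x - g c - (m + e)(x - c) by the excesses of g over
   finitely many non-overlapping subintervals lying in U, which absolute
   continuity makes small. *)

(* The generic hint for [Filter (almost_everywhere _)] fails to infer the
   measure structure of [lebesgue_measure]. *)
#[local] Instance lebesgue_ae_filter (R : realType) :
  Filter (nbhs (almost_everywhere (@lebesgue_measure R))) := ae_filter_ringOfSetsType _.

Section real_facts.
Context {R : realType}.
Implicit Types (a b c d e p x y z D : R).

Lemma exists_pos_lt2 {a b} : 0 < a -> 0 < b -> exists2 c, 0 < c & c < a /\ c < b.
Proof.
move=> a0 b0; have m0 : 0 < Num.min a b by rewrite lt_min a0 b0.
have [ma mb] : Num.min a b <= a /\ Num.min a b <= b by rewrite !ge_min !lexx orbT.
by exists (Num.min a b / 2); lra.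
Qed.

Lemma le_of_forall_le_addM {x y} c : 0 <= c ->
  (forall e, 0 < e -> x <= y + e * c) -> x <= y.
Proof.
move=> c0 H; apply/ler_addgt0Pr => e e0.
have c1 : 0 < c + 1 by lra.
apply: (le_trans (H _ (divr_gt0 e0 c1))); rewrite lerD2l mulrAC ler_pdivrMr //.
by rewrite ler_pM2l //; lra.
Qed.

Lemma difference_quotient_approx p z D e :
  z != 0 -> `|p / z - D| < e -> `|p - D * z| <= e * `|z|.
Proof.
move=> z0 H; have -> : p - D * z = (p / z - D) * z by rewrite mulrBl divfK.
by rewrite normrM ler_pM2r ?normr_gt0 // ltW.
Qed.

Lemma real_induction {c d} {P : R -> Prop} : c <= d ->
  (forall x, c <= x <= d -> (forall y, c <= y < x -> P y) -> P x) ->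
  (forall x, c <= x < d -> (forall y, c <= y <= x -> P y) ->
     exists2 eta, 0 < eta & forall y, x < y < x + eta -> y <= d -> P y) ->
  forall x, c <= x <= d -> P x.
Proof.
move=> cd left right.
pose S := [set x | c <= x <= d /\ forall y, c <= y <= x -> P y].
have Pc : P c.
  by apply: left => [|y /andP[? ?]]; [apply/andP; lra | exfalso; lra].
have Sc : S c.
  by split => [|y /andP[? ?]]; [apply/andP; lra | have -> : y = c by lra].
have hS : has_sup S by split; [exists c | exists d => x [/andP[]]].
set s := sup S.
have s_ub : ubound S s := sup_upper_bound hS.
have cs : c <= s := s_ub c Sc.
have sd : s <= d by apply: ge_sup; [exists c | move=> x [/andP[]]].
have below_s y : c <= y < s -> P y.
  move=> /andP[cy ys]; have [z [_ Pz] yz] := sup_adherent (ltac:(lra) : 0 < s - y) hS.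
  by apply: Pz; apply/andP; split => //; rewrite -/s in yz; lra.
have upto_s y : c <= y <= s -> P y.
  move=> /andP[cy]; rewrite le_eqVlt => /orP[/eqP -> | ys].
    by apply: left => //; apply/andP.
  by apply: below_s; apply/andP.
have -> : d = s.
  apply/eqP; rewrite eq_le sd andbT leNgt; apply/negP => lt_sd.
  have [eta eta0 Heta] := right s (introT andP (conj cs lt_sd)) upto_s.
  have [r r0 [reta rd]] := exists_pos_lt2 eta0 (ltac:(lra) : 0 < d - s).
  suff /s_ub : S (s + r) by lra.
  split => [|y /andP[cy yr]]; first by apply/andP; lra.
  have [ys|sy] := leP y s; first by apply: upto_s; apply/andP.
  by apply: Heta; [apply/andP | ]; lra.
exact: upto_s.
Qed.

End real_facts.

Section derivative_within.
Context {R : realType}.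
Implicit Types (A : set R) (c d e x D T t : R) (g w u du : R -> R).

(* Derivative relative to [A] in first-order-approximation form; at an endpoint
   of an interval [A] it is the one-sided derivative that [C1_on] provides. *)
Definition is_derive_within (A : set R) w x D :=
  forall e, 0 < e -> exists2 d, 0 < d &
    forall y, A y -> `|y - x| < d -> `|w y - w x - D * (y - x)| <= e * `|y - x|.

Lemma is_derive_withinS {A B : set R} {w x D} :
  B `<=` A -> is_derive_within A w x D -> is_derive_within B w x D.
Proof.
move=> BA H e /H [d d0 Hd]; exists d => // y /BA; exact: Hd.
Qed.

Lemma is_derive_withinB {A : set R} {g w x Dg Dw} :
  is_derive_within A g x Dg -> is_derive_within A w x Dw ->
  is_derive_within A (fun t => g t - w t) x (Dg - Dw).
Proof.
move=> Hg Hw e e0.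
have [d1 d10 H1] := Hg (e / 2) ltac:(lra).
have [d2 d20 H2] := Hw (e / 2) ltac:(lra).
have [d d0 [dd1 dd2]] := exists_pos_lt2 d10 d20.
exists d => // y Ay yd.
have -> : g y - w y - (g x - w x) - (Dg - Dw) * (y - x) =
    (g y - g x - Dg * (y - x)) - (w y - w x - Dw * (y - x)) by ring.
apply: (le_trans (ler_normB _ _)).
have := H1 y Ay ltac:(lra); have := H2 y Ay ltac:(lra); lra.
Qed.

Lemma C1_on_is_derive_within {T u du t} : C1_on T u du -> 0 <= t <= T ->
  is_derive_within [set s | 0 <= s <= T] u t (du t).
Proof.
move=> [_ /(_ t) Hq] tT e e0.
move: (Hq tT) => /cvgrPdist_lt/(_ e e0); rewrite /within /= => /nbhs_ballP [d d0 Hd].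
exists d => // y yT yd.
have [->|yt] := eqVneq y t; first by rewrite !subrr mulr0 subr0 normr0 mulr0.
apply: difference_quotient_approx; first by rewrite subr_eq0.
rewrite distrC; apply: Hd; last by split.
by rewrite /ball /= distrC.
Qed.

Lemma derivable_is_derive_within {A : set R} {g x} :
  derivable g x 1 -> is_derive_within A g x (derive1 g x).
Proof.
move=> dg e e0.
have Hq : (fun h => h^-1 *: ((g \o shift x) (h *: 1) - g x)) @ 0^' --> derive1 g x.
  by rewrite derive1E; exact: dg.
move: Hq => /cvgrPdist_lt/(_ e e0) /nbhs_ballP [d d0 Hd].
exists d => // y _ yd.
have [->|yx] := eqVneq y x; first by rewrite !subrr mulr0 subr0 normr0 mulr0.
apply: difference_quotient_approx; first by rewrite subr_eq0.
have := Hd (y - x); rewrite /ball /= sub0r normrN subr_eq0 => /(_ yd yx).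
rewrite /shift /= scaler1 subrK => H.
by rewrite distrC mulrC; exact: H.
Qed.

Lemma is_derive_within_cvg {A : set R} {w x D} :
  is_derive_within A w x D -> w @ within A (nbhs x) --> w x.
Proof.
move=> Hw; apply/cvgrPdist_lt => e e0.
have [d1 d10 H1] := Hw 1 ltr01.
have [d d0 [dd1 dde]] := exists_pos_lt2 d10 (divr_gt0 e0 (ltr_pwDr ltr01 (normr_ge0 D))).
rewrite /within /=; apply/nbhs_ballP; exists d => // y; rewrite /ball /= distrC => xy Ay.
have := H1 y Ay ltac:(lra); rewrite mul1r => Hy; rewrite distrC.
have : `|D * (y - x)| <= `|D| * d by rewrite normrM ler_wpM2l // ltW.
have : `|D| * d + d < e by move: dde; rewrite ltr_pdivlMr ?ltr_pwDr //; lra.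
have := ler_normD (w y - w x - D * (y - x)) (D * (y - x)); rewrite subrK.
lra.
Qed.

Lemma is_derive_within_min_ge0 {c d x D w} : c <= x -> x < d ->
  is_derive_within [set s | c <= s <= d] w x D ->
  (forall y, c <= y <= d -> w x <= w y) -> 0 <= D.
Proof.
move=> cx xd Hw wmin; apply/ler_addgt0Pr => e e0.
have [d1 d10 H1] := Hw e e0.
have [s s0 [sd1 sd]] := exists_pos_lt2 d10 (ltac:(lra) : 0 < d - x).
have ys : x + s - x = s by ring.
have := H1 (x + s) ltac:(apply/andP; lra); rewrite ys gtr0_norm // => /(_ sd1).
have := wmin (x + s) ltac:(apply/andP; lra).
rewrite ler_norml => ? /andP[_ ?]; nra.
Qed.

Lemma is_derive_within_min_le0 {c d x D w} : c < x -> x <= d ->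
  is_derive_within [set s | c <= s <= d] w x D ->
  (forall y, c <= y <= d -> w x <= w y) -> D <= 0.
Proof.
move=> cx xd Hw wmin; apply/ler_addgt0Pr => e e0.
have [d1 d10 H1] := Hw e e0.
have [s s0 [sd1 sd]] := exists_pos_lt2 d10 (ltac:(lra) : 0 < x - c).
have ys : x - s - x = - s by ring.
have := H1 (x - s) ltac:(apply/andP; lra); rewrite ys normrN gtr0_norm // => /(_ sd1).
have := wmin (x - s) ltac:(apply/andP; lra).
rewrite ler_norml => ? /andP[_ ?]; nra.
Qed.

Definition slope_le_near (A : set R) e g x :=
  exists2 eta, 0 < eta & forall y z, A y -> A z -> y <= x -> x <= z ->
    z - y < eta -> g z - g y <= e * (z - y).

Lemma is_derive_within_slope_le_near {A : set R} {w x D} e :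
  is_derive_within A w x D -> D < e -> slope_le_near A e w x.
Proof.
move=> Hw De; have [d d0 Hd] := Hw (e - D) ltac:(lra).
exists d => // y z Ay Az yx xz zy.
have := Hd y Ay; rewrite ler0_norm ?subr_le0 // => /(_ ltac:(lra)).
have := Hd z Az; rewrite ger0_norm ?subr_ge0 // => /(_ ltac:(lra)).
rewrite !ler_norml => /andP[_ ?] /andP[? _]; nra.
Qed.

End derivative_within.

Section increments.
Context {R : realType}.
Implicit Types (a b c d e m x y : R) (g w : R -> R).

Section increment_bound.
Variables (c e : R) (g : R -> R) (U : set R).

Definition increment_bound x := exists n (l r : nat -> R), [/\
  forall i, (i < n)%N -> [/\ c <= l i, l i <= r i & r i <= x],
  forall i j, (i < n)%N -> (j < n)%N -> i != j -> r i <= l j \/ r j <= l i,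
  forall i z, (i < n)%N -> l i <= z <= r i -> U z &
  g x - g c - e * (x - c) <= \sum_(i < n) (g (r i) - g (l i) - e * (r i - l i))].

Lemma increment_bound_refl : increment_bound c.
Proof.
exists 0%N, (fun=> 0), (fun=> 0); split => //.
by rewrite big_ord0 !subrr mulr0 subrr.
Qed.

Lemma increment_bound_slope {x y} : increment_bound y -> y <= x ->
  g x - g y <= e * (x - y) -> increment_bound x.
Proof.
move=> [n [l [r [H1 H2 H3 H4]]]] yx gxy; exists n, l, r; split => //.
  by move=> i /H1 [? ? ?]; split => //; lra.
have : e * (x - c) = e * (x - y) + e * (y - c) by ring.
lra.
Qed.

Lemma increment_bound_cover {x y} : increment_bound y -> c <= y -> y <= x ->
  (forall z, y <= z <= x -> U z) -> increment_bound x.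
Proof.
move=> [n [l [r [H1 H2 H3 H4]]]] cy yx Uyx.
exists n.+1, (fun i => if i == n then y else l i), (fun i => if i == n then x else r i).
have lt_n i : (i < n.+1)%N -> i = n \/ (i < n)%N.
  by rewrite ltnS leq_eqVlt => /orP[/eqP|]; [left | right].
split.
- move=> i /lt_n [->|/[dup] ilt /H1 [? ? ?]]; rewrite ?eqxx ?(ltn_eqF ilt).
    by split.
  by split => //; lra.
- move=> i j /lt_n [->|ilt] /lt_n [->|jlt];
    rewrite ?eqxx ?(ltn_eqF ilt) ?(ltn_eqF jlt) //.
  + by move=> _; right; have [? ? ?] := H1 j jlt; lra.
  + by move=> _; left; have [? ? ?] := H1 i ilt; lra.
  + exact: H2.
- move=> i z /lt_n [->|ilt]; rewrite ?eqxx ?(ltn_eqF ilt); first exact: Uyx.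
  exact: H3.
rewrite big_ord_recr /= eqxx.
rewrite (eq_bigr (fun i : 'I_n => g (r i) - g (l i) - e * (r i - l i))); last first.
  by move=> i _; rewrite /= (ltn_eqF (ltn_ord i)).
have : e * (x - c) = e * (x - y) + e * (y - c) by ring.
lra.
Qed.

Lemma increment_bound_of_local d : c <= d ->
  (forall x, c <= x <= d -> slope_le_near [set s | c <= s <= d] e g x \/ nbhs x U) ->
  increment_bound d.
Proof.
move=> cd local.
have step x : c <= x <= d -> exists2 eta, 0 < eta & forall y, c <= y <= d ->
    `|y - x| < eta -> (y <= x -> increment_bound y -> increment_bound x) /\
                      (x <= y -> increment_bound x -> increment_bound y).
  move=> hx; case: (local x hx) => [[eta eta0 Hs] | /nbhs_ballP [eta eta0 HU]];
    exists eta => // y hy; rewrite ltr_norml => /andP[? ?].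
    split => [yx Py | xy Px].
      by apply: (increment_bound_slope Py) => //; apply: Hs => //; lra.
    by apply: (increment_bound_slope Px) => //; apply: Hs => //; lra.
  have hc : c <= y by move: hy => /andP[].
  have inU z : y <= z <= x \/ x <= z <= y -> U z.
    move=> hz; apply: HU; rewrite /ball /= ltr_norml.
    by case: hz => /andP[? ?]; apply/andP; lra.
  split => [yx Py | xy Px].
    by apply: (increment_bound_cover Py) => // z hz; apply: inU; left.
  apply: (increment_bound_cover Px) => // [|z hz]; last by apply: inU; right.
  by move: hx => /andP[].
suff : forall x, c <= x <= d -> increment_bound x by apply; rewrite cd lexx.
apply: (real_induction cd) => [x hx IH | x /andP[cx xd] IH].
  have [->|xc] := eqVneq x c; first exact: increment_bound_refl.
  have [eta eta0 Heta] := step x hx.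
  have cx : c < x by move: hx => /andP[? _]; rewrite lt_neqAle eq_sym xc.
  have [r r0 [reta rx]] := exists_pos_lt2 eta0 (ltac:(lra) : 0 < x - c).
  have hy : c <= x - r <= d by move: hx => /andP[_ ?]; apply/andP; lra.
  apply: ((Heta (x - r) hy _).1 _ (IH (x - r) _)).
  - by rewrite addrAC subrr add0r normrN gtr0_norm.
  - lra.
  - by apply/andP; lra.
have [eta eta0 Heta] := step x (introT andP (conj cx (ltW xd))).
exists eta => // y /andP[xy yeta] yd.
apply: ((Heta y _ _).2 (ltW xy) (IH x _)).
- by apply/andP; lra.
- by rewrite gtr0_norm; lra.
- by apply/andP.
Qed.

End increment_bound.

Lemma sum_lengths_lt {U : set R} {n} {l r : nat -> R} {del} :
  open U -> (lebesgue_measure U < del%:E)%E ->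
  (forall i, (i < n)%N -> l i <= r i) ->
  (forall i j, (i < n)%N -> (j < n)%N -> i != j -> r i <= l j \/ r j <= l i) ->
  (forall i z, (i < n)%N -> l i <= z <= r i -> U z) ->
  \sum_(i < n) (r i - l i) < del.
Proof.
move=> oU mU lr disj inU.
pose F i : set R := [set` `[l i, r i[].
have mF (i : 'I_n) : measurable (F i) by exact: measurable_itv.
have tF : trivIset setT (fun i : 'I_n => F i).
  move=> i j _ _ [z []]; rewrite /F /= !in_itv /= => /andP[? ?] /andP[? ?].
  apply/val_inj/eqP; apply: contraT => ij.
  by case: (disj i j (ltn_ord i) (ltn_ord j) ij); lra.
have E : lebesgue_measure (\big[setU/set0]_(i < n) F i) = (\sum_(i < n) (r i - l i))%:E.
  rewrite measure_bigsetU_ord // -sumEFin; apply: eq_bigr => i _.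
  apply: (eq_trans (lebesgue_measure_itv `[l i, r i[)); rewrite /= lte_fin.
  have := lr i (ltn_ord i); rewrite le_eqVlt => /orP[/eqP ->|-> //].
  by rewrite ltxx subrr.
rewrite -lte_fin -E; apply: le_lt_trans mU.
apply: le_measure; rewrite ?inE.
- by apply: bigsetU_measurable => i _; exact: measurable_itv.
- exact: open_measurable.
- rewrite -bigcup_mkord => z [i /= ilt]; rewrite /F /= in_itv /= => /andP[? ?].
  by apply: (inU i) => //; apply/andP; lra.
Qed.

Lemma derive_within_increment_le {A : set R} {c d m w} {dw : R -> R} : c <= d ->
  [set s | c <= s <= d] `<=` A ->
  (forall x, c <= x <= d -> is_derive_within A w x (dw x) /\ dw x <= m) ->
  w d - w c <= m * (d - c).
Proof.
move=> cd cdA Hw.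
apply: (le_of_forall_le_addM (d - c)); first lra.
move=> e e0; rewrite -mulrDl.
have [n [l [r [H1 _ H3 H4]]]] : increment_bound c (m + e) w set0 d.
  apply: increment_bound_of_local => // x hx; left.
  have [Dx dxm] := Hw x hx.
  by apply: (is_derive_within_slope_le_near _ (is_derive_withinS cdA Dx)); lra.
case: n H1 H3 H4 => [|n] H1 H3 H4; first by rewrite big_ord0 in H4; lra.
by have [_ ? _] := H1 0%N isT; exfalso; apply: (H3 0%N (l 0%N)) => //; apply/andP.
Qed.

Lemma abs_cont_increment_le {a b c d m g} : a <= c -> c <= d -> d <= b ->
  abs_cont_on a b g ->
  {ae (@lebesgue_measure R), forall t, c <= t <= d ->
     derivable g t 1 /\ derive1 g t <= m} ->
  g d - g c <= m * (d - c).
Proof.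
move=> ac cd db gac [N [mN N0 bad]].
apply: (le_of_forall_le_addM (d - c + 1 + `|m|)); first by have := normr_ge0 m; lra.
move=> e e0.
have [dl dl0 Hdl] := gac e e0.
have [del del0 [deldl dele]] := exists_pos_lt2 dl0 e0.
have Nfin : (lebesgue_measure N < +oo)%E by rewrite N0 ltry.
have [U [oU NU UN]] := lebesgue_regularity_outer mN Nfin del0.
have mU : measurable U := open_measurable oU.
have muU : (lebesgue_measure U < del%:E)%E.
  apply: (@le_lt_trans _ _ (lebesgue_measure (U `\` N) + lebesgue_measure N)%E).
    apply: le_trans (measureU2 _ _ _); [| exact: measurableD | exact: mN].
    apply: le_measure; rewrite ?inE; first exact: mU.
      by apply: measurableU => //; exact: measurableD.
    by move=> z Uz; case: (pselect (N z)) => Nz; [right | left].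
  by rewrite N0 adde0.
have [n [l [r [H1 H2 H3 H4]]]] : increment_bound c (m + e) g U d.
  apply: increment_bound_of_local => // x hx.
  have [Nx|Nx] := pselect (N x); first by right; exact: oU x (NU x Nx).
  have [dg dgm] : derivable g x 1 /\ derive1 g x <= m.
    by apply: contrapT => nP; apply: Nx; apply: bad => /(_ hx).
  left; apply: (is_derive_within_slope_le_near _ (derivable_is_derive_within dg)).
  lra.
have len : \sum_(i < n) (r i - l i) < del.
  by apply: (sum_lengths_lt oU muU _ H2 H3) => i /H1 [].
have incr : \sum_(i < n) `|g (r i) - g (l i)| < e.
  apply: (Hdl n (fun i : 'I_n => l i) (fun i : 'I_n => r i)) => [i|i j ij|].
  - by have [? ? ?] := H1 i (ltn_ord i); split; [lra | split; lra].
  - exact: H2.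
  - lra.
have len0 : 0 <= \sum_(i < n) (r i - l i).
  by apply: sumr_ge0 => i _; have [_ ? _] := H1 i (ltn_ord i); lra.
have : \sum_(i < n) (g (r i) - g (l i)) <= \sum_(i < n) `|g (r i) - g (l i)|.
  by apply: ler_sum => i _; exact: ler_norm.
have : - m * \sum_(i < n) (r i - l i) <= `|m| * e.
  apply: (le_trans (ler_wpM2r len0 (ler_norm (- m)))); rewrite normrN.
  by apply: ler_wpM2l => //; lra.
move: H4; rewrite sumrB -mulr_sumr.
have : 0 <= e * \sum_(i < n) (r i - l i) by exact: mulr_ge0 (ltW e0) len0.
nra.
Qed.

Lemma abs_cont_onB {a b g w} : abs_cont_on a b g -> abs_cont_on a b w ->
  abs_cont_on a b (g - w).
Proof.
move=> gac wac e e0.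
have [d1 d10 K1] := gac (e / 2) ltac:(lra).
have [d2 d20 K2] := wac (e / 2) ltac:(lra).
have [d d0 [dd1 dd2]] := exists_pos_lt2 d10 d20.
exists d => // n l r lr disj len.
have := K1 n l r lr disj ltac:(lra); have := K2 n l r lr disj ltac:(lra).
have : \sum_(i < n) `|g (r i) - w (r i) - (g (l i) - w (l i))| <=
    \sum_(i < n) `|g (r i) - g (l i)| + \sum_(i < n) `|w (r i) - w (l i)|.
  rewrite -big_split /=; apply: ler_sum => i _.
  have -> : g (r i) - w (r i) - (g (l i) - w (l i)) =
      (g (r i) - g (l i)) - (w (r i) - w (l i)) by ring.
  exact: ler_normB.
lra.
Qed.

End increments.

Section touching.
Context {R : realType}.
Implicit Types (a T t : R) (w u du alpha dalpha : R -> R).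

Lemma periodic_nonneg_zero_critical {T w} {dw : R -> R} {t0} : 0 < T ->
  (forall t, 0 <= t <= T -> is_derive_within [set s | 0 <= s <= T] w t (dw t)) ->
  (forall t, 0 <= t <= T -> 0 <= w t) -> w 0 = w T -> dw 0 = dw T ->
  0 <= t0 <= T -> w t0 = 0 ->
  exists t1, [/\ 0 <= t1 < T, w t1 = 0 & dw t1 = 0].
Proof.
move=> T0 Dw w_ge0 w0T dw0T /andP[t00 t0T] wt0.
have wmin t : w t = 0 -> forall y, 0 <= y <= T -> w t <= w y by move=> -> y /w_ge0.
have dw_ge0 t : 0 <= t < T -> w t = 0 -> 0 <= dw t.
  move=> /andP[? ?] wt; apply: (is_derive_within_min_ge0 _ _ (Dw t _) (wmin t wt)) => //.
  by apply/andP; lra.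
have dw_le0 t : 0 < t <= T -> w t = 0 -> dw t <= 0.
  move=> /andP[? ?] wt; apply: (is_derive_within_min_le0 _ _ (Dw t _) (wmin t wt)) => //.
  by apply/andP; lra.
have [/andP[? ?]|t0_end] := boolP (0 < t0 < T).
  have : 0 <= dw t0 by apply: dw_ge0 => //; apply/andP.
  have : dw t0 <= 0 by apply: dw_le0 => //; apply/andP; lra.
  by exists t0; split => //; [apply/andP | ]; lra.
have w00 : w 0 = 0.
  move: t0_end wt0; rewrite negb_and -!leNgt => /orP[? | ?].
    by have -> : t0 = 0 by lra.
  by rewrite w0T; have -> : t0 = T by lra.
have : 0 <= dw 0 by apply: dw_ge0 => //; apply/andP; lra.
have : dw T <= 0 by apply: dw_le0; [apply/andP; lra | rewrite -w0T].
by exists 0; split => //; [apply/andP | ]; lra.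
Qed.

Lemma C1_on_cvg {T u du t} : C1_on T u du -> 0 <= t <= T ->
  u @ within [set s | 0 <= s <= T] (nbhs t) --> u t /\
  du @ within [set s | 0 <= s <= T] (nbhs t) --> du t.
Proof.
move=> Cu tT; split; first exact: is_derive_within_cvg (C1_on_is_derive_within Cu tT).
have -> : [set s | 0 <= s <= T] = [set` `[0, T]].
  by apply/seteqP; split => s; rewrite /= in_itv.
by case: Cu => /subspace_continuousP + _; apply; rewrite /= in_itv.
Qed.

Lemma touching_derive_gap {T a t1} {phi f : R -> R} {h : R -> R -> R}
    {u du alpha dalpha} :
  0 <= t1 < T -> 0 < a -> continuous f -> condA0 T h ->
  C1_on T u du -> C1_on T alpha dalpha -> u t1 = alpha t1 -> du t1 = dalpha t1 ->
  {ae (@lebesgue_measure R), forall t, 0 <= t <= T ->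
     derivable (phi \o du) t 1 /\ Lop phi f h u du t = 0} ->
  {ae (@lebesgue_measure R), forall t, 0 <= t <= T ->
     derivable (phi \o dalpha) t 1 /\ a <= Lop phi f h alpha dalpha t} ->
  exists2 dl, 0 < dl /\ t1 + dl < T &
    {ae (@lebesgue_measure R), forall t, t1 <= t <= t1 + dl ->
       derivable ((phi \o du) - (phi \o dalpha)) t 1 /\
       derive1 ((phi \o du) - (phi \o dalpha)) t <= - (a / 2)}.
Proof.
move=> /andP[t10 t1T] a0 fc hA0 Cu Cal ut1 dut1 u_ae al_ae.
set A := [set s | 0 <= s <= T].
have t1A : A t1 by rewrite /A /= t10 ltW.
have [ucv ducv] := C1_on_cvg Cu t1A.
have [alcv dalcv] := C1_on_cvg Cal t1A.
have [dA dA0 hA] := hA0 t1 (alpha t1) (a / 8) t1A ltac:(lra).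
have Fcv : (fun s => f (u s) * du s - f (alpha s) * dalpha s) @ within A (nbhs t1) --> 0.
  rewrite -(subrr (f (u t1) * du t1)) {2}ut1 {2}dut1.
  apply: cvgB; apply: cvgM => //.
  - exact: cvg_comp ucv (fc _).
  - exact: cvg_comp alcv (fc _).
have : \forall s \near within A (nbhs t1), [/\ `|s - t1| < dA,
    `|f (u s) * du s - f (alpha s) * dalpha s| < a / 4,
    `|u s - alpha t1| < dA & `|alpha s - alpha t1| < dA].
  near=> s; split.
  - near: s; apply: cvg_within; rewrite nbhs_filterE.
    by apply/nbhs_ballP; exists dA => // s; rewrite /ball /= distrC.
  - near: s; move: Fcv => /cvgrPdist_lt/(_ (a / 4) ltac:(lra)).
    by apply: filterS => s; rewrite sub0r normrN.
  - near: s; move: ucv => /cvgrPdist_lt/(_ dA dA0).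
    by apply: filterS => s; rewrite ut1 distrC.
  - near: s; move: alcv => /cvgrPdist_lt/(_ dA dA0).
    by apply: filterS => s; rewrite distrC.
rewrite /within => /nbhs_ballP [d d0 near_t1].
have [dl dl0 [dld dlT]] := exists_pos_lt2 d0 (ltac:(lra) : 0 < T - t1).
exists dl; first by split; lra.
apply: (filterS3 _ _ u_ae al_ae hA) => t ut alt hAt /andP[t1t tdl].
have tA : 0 <= t <= T by apply/andP; lra.
have [dut Lu] := ut tA; have [dat La] := alt tA.
have [st Ft ust alst] := near_t1 t ltac:(rewrite /ball /= ltr_norml; apply/andP; lra) tA.
have h_u := hAt tA st _ ust; have h_al := hAt tA st _ alst.
split; first exact: derivableB.
rewrite derive1E deriveB // -!derive1E.
move: Lu La Ft h_u h_al; rewrite /Lop !ltr_norml.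
move=> Lu La /andP[? ?] /andP[? ?] /andP[? ?].
lra.
Unshelve. all: by end_near.
Qed.
Lemma touching_derive_lt {T a t1} {phi f : R -> R} {h : R -> R -> R}
    {u du alpha dalpha} :
  {homo phi : x y / x < y} -> 0 <= t1 < T -> 0 < a -> continuous f -> condA0 T h ->
  in_D phi T u du -> in_D phi T alpha dalpha -> u t1 = alpha t1 -> du t1 = dalpha t1 ->
  {ae (@lebesgue_measure R), forall t, 0 <= t <= T ->
     derivable (phi \o du) t 1 /\ Lop phi f h u du t = 0} ->
  {ae (@lebesgue_measure R), forall t, 0 <= t <= T ->
     derivable (phi \o dalpha) t 1 /\ a <= Lop phi f h alpha dalpha t} ->
  exists2 dl, 0 < dl /\ t1 + dl < T & forall s, t1 < s <= t1 + dl -> du s < dalpha s.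
Proof.
move=> phi_mono t1T a0 fc hA0 [[Cu _] ACu] [[Cal _] ACal] ut1 dut1 u_ae al_ae.
have [dl [dl0 dlT] gap] := touching_derive_gap t1T a0 fc hA0 Cu Cal ut1 dut1 u_ae al_ae.
exists dl => // s /andP[t1s sdl]; have t10 : 0 <= t1 by case/andP: t1T.
suff Gs : phi (du s) - phi (dalpha s) <= - (a / 2) * (s - t1).
  have gap_pos : 0 < a / 2 * (s - t1) by apply: mulr_gt0; lra.
  have lt_phi : phi (du s) < phi (dalpha s) by lra.
  by rewrite ltNge -(le_mono phi_mono) -ltNge.
have := abs_cont_increment_le (m := - (a / 2)) t10 (ltW t1s) (ltac:(lra) : s <= T)
  (abs_cont_onB ACu ACal).
rewrite !fctE /= dut1 subrr subr0; apply.
by apply: filterS gap => t Ht /andP[? ?]; apply: Ht; apply/andP; lra.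
Qed.

Lemma nonneg_zero_no_descent {T w} {dw : R -> R} {t1 s} : 0 <= t1 -> t1 < s -> s < T ->
  (forall t, 0 <= t <= T -> is_derive_within [set s | 0 <= s <= T] w t (dw t)) ->
  (forall t, 0 <= t <= T -> 0 <= w t) -> w t1 = 0 -> dw t1 <= 0 ->
  (forall x, t1 < x <= s -> dw x < 0) -> False.
Proof.
move=> t10 t1s sT Dw w_ge0 wt1 dwt1 dw_lt.
have : w s - w t1 <= 0 * (s - t1).
  apply: (derive_within_increment_le (A := [set s | 0 <= s <= T])).
  - lra.
  - by move=> x /andP[? ?]; apply/andP; lra.
  - move=> x /andP[t1x xs]; split; first by apply: Dw; apply/andP; lra.
    have [->|xt1] := eqVneq x t1; first exact: dwt1.
    by apply/ltW/dw_lt; rewrite xs andbT lt_neqAle eq_sym xt1.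
rewrite wt1 mul0r subr0 => ws.
have ws0 : w s = 0 by apply/eqP; rewrite eq_le ws w_ge0 //; apply/andP; lra.
have : 0 <= dw s.
  apply: (is_derive_within_min_ge0 _ sT (Dw _ _)) => [||y /w_ge0]; rewrite ?ws0 //.
  - lra.
  - by apply/andP; lra.
by rewrite leNgt dw_lt // lexx andbT.
Qed.

End touching.

Theorem lemma2p1 (R : realType) (T : R) (phi f : R -> R) (h : R -> R -> R)
  (a : R) (alpha dalpha : R -> R) :
  0 < T ->
  increasing_homeo_fix0 phi ->
  continuous f ->
  caratheodory T h ->
  condA0 T h ->
  0 < a ->
  in_D phi T alpha dalpha ->
  {ae (@lebesgue_measure R), forall t, 0 <= t <= T ->
     derivable (phi \o dalpha) t 1 /\ a <= Lop phi f h alpha dalpha t} ->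
  strict_lower_solution phi f h T alpha dalpha.
Proof.
move=> T0 [phi_mono _] fc _ hA0 a0 alphaD alpha_ae.
split=> //; split.
  by apply: filterS alpha_ae => t Ht /Ht[? ?]; split => //; lra.
move=> u du [uD u_ae] alpha_le t0 t0T.
rewrite lt_neqAle alpha_le // andbT; apply/negP => /eqP touch.
have [[[Cal [al0 dal0]] _] [[Cu [u0 du0]] _]] := (alphaD, uD).
pose w t := u t - alpha t; pose dw t := du t - dalpha t.
have w_der t : 0 <= t <= T -> is_derive_within [set s | 0 <= s <= T] w t (dw t).
  by move=> tT; apply: is_derive_withinB; apply: C1_on_is_derive_within.
have w_ge0 t : 0 <= t <= T -> 0 <= w t by move=> /alpha_le; rewrite subr_ge0.
have [t1 [t1T w1 dw1]] : exists t1, [/\ 0 <= t1 < T, w t1 = 0 & dw t1 = 0].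
  apply: (periodic_nonneg_zero_critical T0 w_der w_ge0 _ _ t0T); rewrite /w /dw.
  - by rewrite u0 al0.
  - by rewrite du0 dal0.
  - by rewrite touch subrr.
have [ut1 dut1] : u t1 = alpha t1 /\ du t1 = dalpha t1.
  by split; apply/eqP; rewrite -subr_eq0; apply/eqP.
have [dl [dl0 dlT] du_lt] :=
  touching_derive_lt phi_mono t1T a0 fc hA0 uD alphaD ut1 dut1 u_ae alpha_ae.
have [t10 _] := andP t1T.
apply: (nonneg_zero_no_descent t10 _ dlT w_der w_ge0 w1) => [||x /du_lt].
- by rewrite ltrDl.
- by rewrite dw1.
- by rewrite subr_lt0.
Qed.
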